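(* Let $L=\mathcal{L}\,dt$ be a Lagrangian on $J^1Q$ and let $H=p_i\,dq^i-\mathcal{H}\,dt$ be a Hamiltonian form on $V^*Q$ weakly associated with $L$. Then at every point of the Lagrangian constraint space $N_L$ the forms $H$ and $\widehat H^*H_L$ coincide: $H|_{N_L}=\widehat H^*H_L|_{N_L}$.
   Context: Let $Q\to\mathbb{R}$ be a fibre bundle over the time axis with coordinates $(t,q^i)$; $J^1Q$ is its first jet manifold with coordinates $(t,q^i,q^i_t)$; $V^*Q$ is its vertical cotangent bundle with coordinates $(t,q^i,p_i)$, $\partial^i=\partial/\partial p_i$. A Lagrangian is $L=\mathcal{L}\,dt$ with $\mathcal{L}$ a function on $J^1Q$; put $\pi_i=\partial\mathcal{L}/\partial q^i_t$. The Legendre map $\widehat L:J^1Q\to V^*Q$ over $Q$ is $p_i\circ\widehat L=\pi_i$, and $N_L=\widehat L(J^1Q)$ is the Lagrangian constraint space. The Poincaré–Cartan form is $H_L=\mathcal{L}\,dt+\pi_i(dq^i-q^i_t\,dt)$. A Hamiltonian form is a 1-form on $V^*Q$ locally $H=p_i\,dq^i-\mathcal{H}\,dt$ (the pull-back of the Liouville form $p\,dt+p_i\,dq^i$ of $T^*Q$ by a section of $T^*Q\to V^*Q$); its Hamiltonian map is $\widehat H:V^*Q\to J^1Q$, $q^i_t\circ\widehat H=\partial^i\mathcal{H}$. $H$ is weakly associated with $L$ if $\widehat L\circ\widehat H\circ\widehat L=\widehat L$ and the equality $H=H_{\widehat H}+\widehat H^*L$ holds at points of $N_L$, where $H_{\widehat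 H}=p_i\,dq^i-p_i\partial^i\mathcal{H}\,dt$; in coordinates the latter reads $\mathcal{H}(z)=p_i\partial^i\mathcal{H}(z)-\mathcal{L}(t,q^i,\partial^j\mathcal{H}(z))$ for $z\in N_L$. *)

From Stdlib Require Import Reals.
From Coquelicot Require Import Coquelicot.
From mathcomp Require Import ssreflect ssrfun ssrbool eqtype ssrnat fintype bigop.

Set Implicit Arguments.
Unset Strict Implicit.
Local Open Scope R_scope.

(* Local chart: Q = R x R^n with coordinates (t, q^i), i : 'I_n.
   J^1Q has coordinates (t, q^i, q^i_t); V^*Q has coordinates (t, q^i, p_i). *)
Definition vec (n : nat) := 'I_n -> R.

Definition upd {n} (f : vec n) (i : 'I_n) (s : R) : vec n :=
  fun j => if j == i then s else f j.

Definition sumR {n} (f : 'I_n -> R) : R := \big[Rplus/0]_(j < n) f j.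

(* A covector at a point of J^1Q (resp. V^*Q), written in the coframe
   dt, dq^i, d(third coordinate) where the third coordinate is q^i_t (resp. p_i). *)
Record cov (n : nat) := Cov { c_t : R; c_q : vec n; c_3 : vec n }.

Definition form (n : nat) := R -> vec n -> vec n -> cov n.

Definition cov_add {n} (a b : cov n) : cov n :=
  Cov (c_t a + c_t b) (fun i => c_q a i + c_q b i) (fun i => c_3 a i + c_3 b i).

Definition dthird {n} (F : R -> vec n -> vec n -> R) (t : R) (q x : vec n)
  (i : 'I_n) : R := Derive (fun s => F t q (upd x i s)) (x i).

Definition momenta {n} (L : R -> vec n -> vec n -> R) t q v : vec n :=
  dthird L t q v.

(* Fibre part of the Hamiltonian map: q^i_t o H^ = d^i Hc *)
Definition hammap {n} (Hc : R -> vec n -> vec n -> R) t q p : vec n :=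
  dthird Hc t q p.

(* Lagrangian constraint space N_L = image of the Legendre map (over Q) *)
Definition N_L {n} (L : R -> vec n -> vec n -> R) (t : R) (q p : vec n) : Prop :=
  exists v : vec n, p = momenta L t q v.

(* Pull-back of a 1-form w on J^1Q along a map V^*Q -> J^1Q over Q,
   (t,q,p) |-> (t,q,phi(t,q,p)). *)
Definition pullback {n} (phi : R -> vec n -> vec n -> vec n) (w : form n) : form n :=
  fun t q p =>
    let y := w t q (phi t q p) in
    Cov (c_t y + sumR (fun j => c_3 y j * Derive (fun s => phi s q p j) t))
        (fun i => c_q y i
           + sumR (fun j => c_3 y j * Derive (fun s => phi t (upd q i s) p j) (q i)))
        (fun i => sumR (fun j => c_3 y j * Derive (fun s => phi t q (upd p i s) j) (p i))).

Definition lag_form {n} (L : R -> vec n -> vec n -> R) : form n :=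
  fun t q v => Cov (L t q v) (fun _ => 0) (fun _ => 0).

(* Poincare-Cartan form H_L = Lc dt + pi_i (dq^i - q^i_t dt) *)
Definition PC_form {n} (L : R -> vec n -> vec n -> R) : form n :=
  fun t q v => Cov (L t q v - sumR (fun i => momenta L t q v i * v i))
                   (momenta L t q v) (fun _ => 0).

Definition ham_form {n} (Hc : R -> vec n -> vec n -> R) : form n :=
  fun t q p => Cov (- Hc t q p) p (fun _ => 0).

Definition HH_form {n} (Hc : R -> vec n -> vec n -> R) : form n :=
  fun t q p => Cov (- sumR (fun i => p i * hammap Hc t q p i)) p (fun _ => 0).

Definition weakly_associated {n} (L Hc : R -> vec n -> vec n -> R) : Prop :=
  (forall t q v, momenta L t q (hammap Hc t q (momenta L t q v)) = momenta L t q v)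
  /\ (forall t q p, N_L L t q p ->
        ham_form Hc t q p
        = cov_add (HH_form Hc t q p) (pullback (hammap Hc) (lag_form L) t q p)).

(** On [N_L] the condition [L^ o H^ o L^ = L^] says that the momenta of the
    Lagrangian at the velocity [H^(z)] are the fibre coordinates [p] of [z]
    itself. Hence [H^* H_L] has [dq^i]-part [p_i] and [dt]-part
    [L(t, q, d Hc) - p_i d^i Hc], which is [- Hc] by the second condition
    [H = H_{H^} + H^* L] on [N_L]. Neither [H_L] nor [L] has a component along
    the velocity coordinates, so the derivatives of [H^] never enter. *)
From Stdlib Require Import Reals.
From Coquelicot Require Import Coquelicot.
From mathcomp Require Import ssreflect ssrfun ssrbool eqtype ssrnat fintype bigop.
From Stdlib Require Import FunctionalExtensionality Lra.

Local Open Scope R_scope.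

Definition horizontal {n} (w : form n) : Prop :=
  forall t q v i, c_3 (w t q v) i = 0.

Lemma sumR_eq0_mull {n} (a g : 'I_n -> R) :
  (forall j, a j = 0) -> sumR (fun j => a j * g j) = 0.
Proof.
by move=> a0; apply: (big_rec (fun x => x = 0)) => // j x _ ->; rewrite a0; ring.
Qed.

Lemma pullback_horizontal {n} (phi : R -> vec n -> vec n -> vec n) (w : form n)
    t q p :
  horizontal w ->
  pullback phi w t q p
  = Cov (c_t (w t q (phi t q p))) (c_q (w t q (phi t q p))) (fun _ => 0).
Proof.
move=> hor.
have no_velocity_part g :
  sumR (fun j => c_3 (w t q (phi t q p)) j * g j) = 0.
  exact: sumR_eq0_mull (hor t q _).
rewrite /pullback /= no_velocity_part Rplus_0_r.
congr Cov; apply: functional_extensionality => i.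
- by rewrite no_velocity_part Rplus_0_r.
- exact: no_velocity_part.
Qed.

Lemma lag_form_horizontal {n} (L : R -> vec n -> vec n -> R) :
  horizontal (lag_form L).
Proof. by []. Qed.

Lemma PC_form_horizontal {n} (L : R -> vec n -> vec n -> R) :
  horizontal (PC_form L).
Proof. by []. Qed.

Section WeaklyAssociated.

Context {n : nat} {L Hc : R -> vec n -> vec n -> R}.
Hypothesis assoc : weakly_associated L Hc.

Lemma momenta_hammap_N_L {t q p} :
  N_L L t q p -> momenta L t q (hammap Hc t q p) = p.
Proof. by case: assoc => LHL _ [v ->]; exact: LHL. Qed.

Lemma hamiltonian_N_L {t q p} : N_L L t q p ->
  Hc t q p = sumR (fun i => p i * hammap Hc t q p i) - L t q (hammap Hc t q p).
Proof.
case: assoc => _ energy /energy.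
rewrite pullback_horizontal; last exact: lag_form_horizontal.
case=> dt_part _; lra.
Qed.

End WeaklyAssociated.

Theorem mainTheorem8 (n : nat) (L Hc : R -> vec n -> vec n -> R) :
  weakly_associated L Hc ->
  forall (t : R) (q p : vec n), N_L L t q p ->
    ham_form Hc t q p = pullback (hammap Hc) (PC_form L) t q p.
Proof.
move=> assoc t q p NLp.
rewrite pullback_horizontal; last exact: PC_form_horizontal.
rewrite /ham_form /PC_form /= (momenta_hammap_N_L assoc NLp).
by rewrite (hamiltonian_N_L assoc NLp) Ropp_minus_distr.
Qed.
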